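(* Let $L>0$, $\mathbb{T}=\mathbb{R}/L\mathbb{Z}$, let $\gamma_k\in(0,1]$ for all $k\in\mathbb{Z}$, let $s>0$, and set $\delta^{(s)}_k=\frac{(1+k^2)^{s+1}}{\gamma_k^s}$. Let $u_0\in H_{\delta^{(s)}}(\mathbb{T})$ and let $u$ be the solution of the linear equation \[ u_t-u_{txx}+u_x+\mathscr{L}_\gamma(u)=0,\quad x\in\mathbb{T},\qquad u(0)=u_0. \] Then for all $t>0$, \[ |u(t)|_{H^1}^2\le\min\Big(e^{-s}\Big(\frac{s}{2t}\Big)^s|u_0|_{\delta^{(s)}}^2,\ |u_0|_{H^1}^2\Big). \]
   Context: For $u\in L^2(\mathbb{T})$, $\hat u_k$ is its $k$-th Fourier coefficient; in symbols $k$ stands for the frequency $2\pi k/L$. $\mathscr{L}_\gamma$ is the Fourier multiplier $\widehat{\mathscr{L}_\gamma(u)}_k=\gamma_k\hat u_k$. For a positive sequence $(\alpha_k)$, $H_\alpha(\mathbb{T})=\{u : \sum_k\alpha_k|\hat u_k|^2<\infty\}$ with $|u|_\alpha^2=\sum_k\alpha_k|\hat u_k|^2$. The $H^1$ norm is $|u|_{H^1}^2=\sum_k(1+k^2)|\hat u_k|^2$. The solution is given by $\hat u_k(t)=e^{-\frac{\gamma_k+ik}{1+k^2}t}\hat u_k(0)$. *)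

From Stdlib Require Import Reals ZArith.
From Coquelicot Require Import Coquelicot.
Open Scope R_scope.

Definition freq (L : R) (k : Z) : R := 2 * PI * IZR k / L.

(* Sum over Z of a real family, through symmetric partial sums:
   term 0 is f 0, term n>0 is f n + f (-n). For nonnegative families this is
   the usual (unordered) sum over Z. *)
Definition zterm (f : Z -> R) (n : nat) : R :=
  match n with
  | O => f 0%Z
  | S _ => f (Z.of_nat n) + f (- Z.of_nat n)%Z
  end.
Definition summableZ (f : Z -> R) : Prop := ex_series (zterm f).
Definition sumZ (f : Z -> R) : R := Series (zterm f).

(* A function on T is represented by its Fourier coefficients uhat : Z -> C. *)
Definition wnorm2 (alpha : Z -> R) (u : Z -> C) : R :=
  sumZ (fun k => alpha k * (Cmod (u k)) ^ 2).
Definition inH (alpha : Z -> R) (u : Z -> C) : Prop :=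
  summableZ (fun k => alpha k * (Cmod (u k)) ^ 2).

(* H^1 weight 1 + k^2 (k the frequency 2 pi k / L) *)
Definition h1w (L : R) (k : Z) : R := 1 + (freq L k) ^ 2.
Definition H1norm2 (L : R) (u : Z -> C) : R := wnorm2 (h1w L) u.

Definition delta_s (L s : R) (gamma : Z -> R) (k : Z) : R :=
  Rpower (h1w L k) (s + 1) / Rpower (gamma k) s.

Definition cexp (a b : R) : C := (exp a * cos b, exp a * sin b).

(* Solution of u_t - u_txx + u_x + L_gamma u = 0, u(0) = u0, on Fourier side:
   uhat_k(t) = exp(-(gamma_k + i k)/(1+k^2) t) uhat_k(0). *)
Definition sol (L : R) (gamma : Z -> R) (u0 : Z -> C) (t : R) (k : Z) : C :=
  Cmult (cexp (- gamma k * t / h1w L k) (- freq L k * t / h1w L k)) (u0 k).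

(* Each Fourier mode decays independently: |u_k(t)| = e^{-\gamma_k t/(1+k^2)} |u_k(0)|.
   The H^1 bound is immediate since this factor is at most 1.  For the other
   bound, the elementary estimate y^s e^{-y} <= s^s e^{-s} (the maximum of
   y |-> y^s e^{-y}), applied with y = 2 \gamma_k t/(1+k^2), trades the decay
   factor for the weight e^{-s} (s/2t)^s (1+k^2)^s/\gamma_k^s, mode by mode. *)
From Stdlib Require Import Reals ZArith Lra Psatz.
From Coquelicot Require Import Coquelicot.
Open Scope R_scope.

Lemma exp_le x y : x <= y -> exp x <= exp y.
Proof. intros [Hlt | ->]; [left; apply exp_increasing | right]; auto. Qed.

Lemma exp_opp_le_Rpower y s : 0 < y -> 0 < s ->
  exp (- y) <= exp (- s) * Rpower (s / y) s.
Proof.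
  intros Hy Hs. unfold Rpower. rewrite <- exp_plus. apply exp_le.
  assert (Hln : ln (s / y) = - ln (y / s)).
  { replace (s / y) with (/ (y / s)) by (field; lra).
    apply ln_Rinv, Rdiv_lt_0_compat; lra. }
  pose proof (exp_ineq1_le (ln (y / s))) as Hexp.
  rewrite exp_ln in Hexp by (apply Rdiv_lt_0_compat; lra).
  assert (Hmul : s * (1 + ln (y / s)) <= s * (y / s))
    by (apply Rmult_le_compat_l; lra).
  replace (s * (y / s)) with y in Hmul by (field; lra).
  rewrite Hln. lra.
Qed.

Lemma sq_exp_decay_le h g t s : 0 < h -> 0 < g -> 0 < t -> 0 < s ->
  h * exp (- g * t / h) ^ 2
  <= exp (- s) * Rpower (s / (2 * t)) s * (Rpower h (s + 1) / Rpower g s).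
Proof.
  intros Hh Hg Ht Hs.
  set (y := 2 * g * t / h).
  assert (Hy : 0 < y) by (apply Rdiv_lt_0_compat; nra).
  assert (Hsq : exp (- g * t / h) ^ 2 = exp (- y)).
  { simpl. rewrite Rmult_1_r, <- exp_plus. f_equal. unfold y. field. lra. }
  assert (Hratio : Rpower (s / y) s * Rpower g s = Rpower (s / (2 * t)) s * Rpower h s).
  { rewrite !Rpower_mult_distr by (try apply Rdiv_lt_0_compat; lra).
    f_equal. unfold y. field. lra. }
  rewrite Hsq, Rpower_plus, Rpower_1 by lra.
  replace (Rpower (s / (2 * t)) s) with (Rpower (s / y) s * Rpower g s / Rpower h s)
    by (rewrite Hratio; field; apply Rgt_not_eq, exp_pos).
  replace (exp (- s) * (Rpower (s / y) s * Rpower g s / Rpower h s) * (Rpower h s * h / Rpower g s))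
    with (h * (exp (- s) * Rpower (s / y) s)) by (field; split; apply Rgt_not_eq, exp_pos).
  apply Rmult_le_compat_l; [lra |].
  apply exp_opp_le_Rpower; assumption.
Qed.

Lemma le_Rpower_succ_div h g s : 1 <= h -> 0 < g <= 1 -> 0 <= s ->
  h <= Rpower h (s + 1) / Rpower g s.
Proof.
  intros Hh Hg Hs.
  assert (Hhs : 1 <= Rpower h s).
  { rewrite <- (Rpower_O h) by lra. apply Rle_Rpower; lra. }
  assert (Hgs : 0 < Rpower g s <= 1).
  { split; [apply exp_pos |].
    unfold Rpower. rewrite <- exp_0. apply exp_le.
    assert (ln g <= 0) by (rewrite <- ln_1; apply ln_le; lra).
    nra. }
  rewrite Rpower_plus, Rpower_1 by lra.
  apply Rmult_le_reg_r with (Rpower g s); [lra |].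
  unfold Rdiv. rewrite Rmult_assoc, Rinv_l, Rmult_1_r by lra.
  nra.
Qed.

Lemma Cmod_cexp a b : Cmod (cexp a b) = exp a.
Proof.
  unfold Cmod, cexp; simpl.
  pose proof (sin2_cos2 b) as Hpyth. unfold Rsqr in Hpyth.
  match goal with |- sqrt ?e = _ => replace e with (exp a ^ 2) by nra end.
  apply sqrt_pow2. left; apply exp_pos.
Qed.

Lemma zterm_le f g : (forall k, 0 <= f k <= g k) -> forall n, 0 <= zterm f n <= zterm g n.
Proof.
  intros Hfg [|n]; simpl; [apply Hfg |].
  destruct (Hfg (Z.pos (Pos.of_succ_nat n))), (Hfg (Z.neg (Pos.of_succ_nat n))). lra.
Qed.

Lemma summableZ_le f g : (forall k, 0 <= f k <= g k) -> summableZ g -> summableZ f.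
Proof.
  intros Hfg Hg. apply (@ex_series_le R_AbsRing R_CompleteNormedModule _ (zterm g)); [| exact Hg].
  intros n. destruct (zterm_le f g Hfg n).
  change norm with Rabs; simpl. rewrite Rabs_pos_eq; assumption.
Qed.

Lemma sumZ_le f g : (forall k, 0 <= f k <= g k) -> summableZ g -> sumZ f <= sumZ g.
Proof. intros Hfg Hg. apply Series_le; [apply zterm_le |]; assumption. Qed.

Lemma sumZ_scal c f : sumZ (fun k => c * f k) = c * sumZ f.
Proof.
  unfold sumZ. rewrite <- Series_scal_l. apply Series_ext. intros [|n]; simpl; ring.
Qed.

Lemma summableZ_scal c f : summableZ f -> summableZ (fun k => c * f k).
Proof.
  intros Hf. apply ex_series_ext with (fun n => c * zterm f n).
  - intros [|n]; simpl; ring.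
  - exact (@ex_series_scal_l R_AbsRing R_NormedModule c _ Hf).
Qed.

Lemma h1w_ge_1 L k : 1 <= h1w L k.
Proof. unfold h1w. pose proof (pow2_ge_0 (freq L k)). lra. Qed.

Lemma Cmod_sol L gamma u0 t k :
  Cmod (sol L gamma u0 t k) = exp (- gamma k * t / h1w L k) * Cmod (u0 k).
Proof. unfold sol. rewrite Cmod_mult, Cmod_cexp. reflexivity. Qed.

Lemma h1w_mode_ge_0 L k v : 0 <= h1w L k * Cmod v ^ 2.
Proof. pose proof (h1w_ge_1 L k). pose proof (pow2_ge_0 (Cmod v)). nra. Qed.

Lemma sol_mode_le_h1 L gamma u0 t k : 0 <= gamma k -> 0 <= t ->
  h1w L k * Cmod (sol L gamma u0 t k) ^ 2 <= h1w L k * Cmod (u0 k) ^ 2.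
Proof.
  intros Hg Ht. pose proof (h1w_ge_1 L k) as Hh.
  rewrite Cmod_sol, Rpow_mult_distr.
  assert (Hdecay : exp (- gamma k * t / h1w L k) <= 1).
  { rewrite <- exp_0. apply exp_le.
    assert (0 <= gamma k * t / h1w L k) by (apply Rdiv_le_0_compat; nra).
    replace (- gamma k * t / h1w L k) with (- (gamma k * t / h1w L k)) by (field; lra). lra. }
  pose proof (exp_pos (- gamma k * t / h1w L k)).
  pose proof (pow2_ge_0 (Cmod (u0 k))).
  apply Rmult_le_compat_l; [lra |].
  assert (exp (- gamma k * t / h1w L k) ^ 2 <= 1) by nra. nra.
Qed.

Lemma sol_mode_le_delta_s L gamma s u0 t k : 0 < gamma k <= 1 -> 0 < t -> 0 < s ->
  h1w L k * Cmod (sol L gamma u0 t k) ^ 2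
  <= exp (- s) * Rpower (s / (2 * t)) s * (delta_s L s gamma k * Cmod (u0 k) ^ 2).
Proof.
  intros Hg Ht Hs. pose proof (h1w_ge_1 L k).
  rewrite Cmod_sol, Rpow_mult_distr, <- Rmult_assoc, <- Rmult_assoc.
  apply Rmult_le_compat_r; [apply pow2_ge_0 |].
  apply sq_exp_decay_le; lra.
Qed.

Lemma summable_h1w_of_delta_s L gamma s u0 : (forall k, 0 < gamma k <= 1) -> 0 <= s ->
  inH (delta_s L s gamma) u0 -> summableZ (fun k => h1w L k * Cmod (u0 k) ^ 2).
Proof.
  intros Hg Hs Hu0. apply summableZ_le with (2 := Hu0). intros k. split.
  - apply h1w_mode_ge_0.
  - apply Rmult_le_compat_r; [apply pow2_ge_0 |].
    apply le_Rpower_succ_div; [apply h1w_ge_1 | apply Hg | exact Hs].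
Qed.

Theorem mainTheorem5 (L : R) (gamma : Z -> R) (s : R) (u0 : Z -> C)
  (HL : 0 < L)
  (Hgamma : forall k : Z, 0 < gamma k <= 1)
  (Hs : 0 < s)
  (Hu0 : inH (delta_s L s gamma) u0) :
  forall t : R, 0 < t ->
    H1norm2 L (sol L gamma u0 t)
    <= Rmin (exp (- s) * Rpower (s / (2 * t)) s * wnorm2 (delta_s L s gamma) u0)
            (H1norm2 L u0).
Proof.
  intros t Ht. unfold H1norm2, wnorm2.
  apply Rmin_glb.
  - rewrite <- sumZ_scal. apply sumZ_le; [| apply summableZ_scal, Hu0].
    intros k. split; [apply h1w_mode_ge_0 | apply sol_mode_le_delta_s; auto].
  - apply sumZ_le; [| apply (summable_h1w_of_delta_s L gamma s); auto; lra].
    intros k. destruct (Hgamma k).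
    split; [apply h1w_mode_ge_0 | apply sol_mode_le_h1; lra].
Qed.
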